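(* Let $q$ be a prime power and $1\le m\le n$. Identify each $n\times m$ matrix $M$ over $\mathbb{F}_q$ with the $m$-dimensional subspace $\overline{M}$ of $\mathbb{F}_q^{m+n}$ spanned by the columns of the $(m+n)\times m$ matrix $\begin{pmatrix} I_m\\ M\end{pmatrix}$. Let $f$ be a $\lambda$-eigenfunction of the bilinear forms graph $\mathrm{Bil}_q(n,m)$, where $\lambda=-\frac{q^m-1}{q-1}$ is its minimum eigenvalue. Define $\widehat f$ on the vertices of the Grassmann graph $J_q(n+m,m)$ by $\widehat f(\overline{M})=f(M)$ for every $n\times m$ matrix $M$, and $\widehat f(U)=0$ for every $m$-dimensional subspace $U$ not of the form $\overline{M}$. Then $\widehat f$ is a $\lambda$-eigenfunction of $J_q(n+m,m)$, and $\lambda$ is also the minimum eigenvalue of $J_q(n+m,m)$. *)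

From HB Require Import structures.
From mathcomp Require Import all_boot all_order all_algebra all_fingroup.
From mathcomp Require Import reals.
Set Implicit Arguments. Unset Strict Implicit. Unset Printing Implicit Defensive.
Import Order.TTheory GRing.Theory Num.Theory.
Local Open Scope ring_scope.

Definition eigenfunction (R : numDomainType) (V : finType) (adj : rel V)
  (f : V -> R) (lam : R) : Prop :=
  (exists v, f v != 0) /\
  (forall x : V, \sum_(y | adj x y) f y = lam * f x).

Definition is_eigenvalue (R : numDomainType) (V : finType) (adj : rel V) (lam : R) : Prop :=
  exists f : V -> R, eigenfunction adj f lam.

Definition is_min_eigenvalue (R : numDomainType) (V : finType) (adj : rel V) (lam : R) : Prop :=
  is_eigenvalue adj lam /\ forall mu : R, is_eigenvalue adj mu -> lam <= mu.

Definition bil_adj (F : finFieldType) (n m : nat) : rel 'M[F]_(n, m) :=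
  fun M N => \rank (M - N) == 1%N.

(* Grassmann graph J_q(N,m): vertices are the m-dimensional subspaces of F^N.
   A subspace is represented canonically (mxalgebra) by the square matrix
   <<A>>%MS whose row space it is. *)
Definition grass_vertex_pred (F : finFieldType) (N m : nat) : pred 'M[F]_N :=
  fun A => ((<<A>>%MS == A) && (\rank A == m))%N.

Definition grass_vertex (F : finFieldType) (N m : nat) :=
  {A : 'M[F]_N | grass_vertex_pred m A}.

Definition grass_adj (F : finFieldType) (N m : nat) : rel (grass_vertex F N m) :=
  fun U W => \rank (val U :&: val W)%MS == m.-1.

(* overline M : the m-dim subspace of F^(m+n) spanned by the columns of (I_m ; M),
   i.e. the row space of its transpose (I_m | M^T). *)
Definition embed_mx (F : finFieldType) (n m : nat) (M : 'M[F]_(n, m)) : 'M[F]_(m, m + n) :=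
  row_mx (1%:M : 'M[F]_m) M^T.

Definition lift_fun (R : numDomainType) (F : finFieldType) (n m : nat)
  (f : 'M[F]_(n, m) -> R) (U : grass_vertex F (m + n) m) : R :=
  match [pick M : 'M[F]_(n, m) | (embed_mx M == val U)%MS] with
  | Some M => f M
  | None => 0
  end.

From HB Require Import structures.
From mathcomp Require Import all_boot all_order all_algebra all_fingroup.
From mathcomp Require Import reals.
From mathcomp Require Import ring lra zify.
Set Implicit Arguments. Unset Strict Implicit. Unset Printing Implicit Defensive.
Import Order.TTheory GRing.Theory Num.Theory.
Local Open Scope ring_scope.

(* Both graphs carry a family of "cliques" such that two
   vertices lie in exactly [a] common cliques when equal, [b] when adjacent and
   none otherwise, i.e. N N^T = a I + b A for the vertex/clique incidence matrix
   N.  Then A = (N N^T - a I) / b is bounded below by -a/b, and the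
   (-a/b)-eigenfunctions are exactly the functions whose sum over every clique
   vanishes (Section CliqueFamily).
   - In Bil_q(n,m) the cliques are the cosets N0 + {D | rows of D in <e>},
     e a nonzero row vector, giving a = q^n (q^m - 1), b = q^n (q - 1).
   - In J_q(N,m) the cliques are the stars {U | H <= U} of the (m-1)-spaces H,
     giving a = [m]_q = (q^m - 1)/(q - 1), b = 1.
   In both cases -a/b = -[m]_q.  Finally, a star of an (m-1)-space H meets the
   image of M |-> overline M in a Bil-clique (or not at all), so the clique sums
   of the lift of a (-[m]_q)-eigenfunction of Bil_q(n,m) vanish as well; hence
   the lift is a (-[m]_q)-eigenfunction of J_q(n+m,m), which is its minimum
   eigenvalue. *)

Section CliqueFamily.
Variables (R : realFieldType) (V I : finType) (inc : I -> V -> bool) (adj : rel V).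
Variables (a b : R).
Hypothesis b_gt0 : 0 < b.
Hypothesis common_cliques : forall x y,
  \sum_i ((inc i x && inc i y)%:R : R) = (x == y)%:R * a + (adj x y)%:R * b.

Definition clique_sum (g : V -> R) (i : I) : R := \sum_x (inc i x)%:R * g x.

Lemma clique_sum_incident g x :
  \sum_i (inc i x)%:R * clique_sum g i = a * g x + b * \sum_(y | adj x y) g y.
Proof.
rewrite /clique_sum.
transitivity (\sum_y (\sum_i ((inc i x && inc i y)%:R : R)) * g y).
  under eq_bigr => i _ do rewrite mulr_sumr.
  rewrite exchange_big /=; apply: eq_bigr => y _; rewrite mulr_suml.
  by apply: eq_bigr => i _; case: (inc i x); case: (inc i y); rewrite /= ?mul0r ?mul1r.
under eq_bigr => y _ do rewrite common_cliques mulrDl.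
rewrite big_split /= (bigD1 x) //= eqxx big1 ?addr0; last first.
  by move=> y /negbTE; rewrite eq_sym => ->; rewrite !mul0r.
rewrite mul1r; congr (_ + _); rewrite [RHS]mulr_sumr [RHS]big_mkcond /=.
by apply: eq_bigr => y _; case: (adj x y); rewrite /= ?mul0r ?mulr0 ?mul1r.
Qed.

Lemma sum_sqr_clique_sums g :
  \sum_x g x * (\sum_i (inc i x)%:R * clique_sum g i) = \sum_i clique_sum g i ^+ 2.
Proof.
under eq_bigr => x _ do rewrite mulr_sumr.
rewrite exchange_big /=; apply: eq_bigr => i _.
by rewrite expr2 /clique_sum mulr_suml; apply: eq_bigr => x _; ring.
Qed.

Lemma clique_sums_norm g mu : (forall x, \sum_(y | adj x y) g y = mu * g x) ->
  \sum_i clique_sum g i ^+ 2 = (a + b * mu) * \sum_x g x ^+ 2.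
Proof.
move=> eig; rewrite -sum_sqr_clique_sums mulr_sumr.
by apply: eq_bigr => x _; rewrite clique_sum_incident eig; ring.
Qed.

Lemma clique_eigen_lower_bound g mu : (exists v, g v != 0) ->
  (forall x, \sum_(y | adj x y) g y = mu * g x) -> - (a / b) <= mu.
Proof.
move=> [v gv] eig.
have norm_gt0 : 0 < \sum_x g x ^+ 2.
  rewrite (bigD1 v) //=; apply: ltr_wpDr; last by rewrite exprn_even_gt0.
  by apply: sumr_ge0 => ? _; apply: sqr_ge0.
have : 0 <= (a + b * mu) * \sum_x g x ^+ 2.
  by rewrite -clique_sums_norm //; apply: sumr_ge0 => ? _; apply: sqr_ge0.
rewrite pmulr_lge0 // => ab_mu_ge0.
have : 0 <= b * (a / b + mu).
  by rewrite mulrDr [b * (a / b)]mulrC divfK ?lt0r_neq0.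
rewrite pmulr_rge0 //; lra.
Qed.

(* For mu = -a/b the norm of N^T g is zero. *)
Lemma clique_sums_vanish g : (forall x, \sum_(y | adj x y) g y = - (a / b) * g x) ->
  forall i, clique_sum g i = 0.
Proof.
move=> eig i; have sum0 : \sum_j clique_sum g j ^+ 2 = 0.
  rewrite (clique_sums_norm eig) mulrN (mulrC b) divfK ?lt0r_neq0 //.
  by rewrite subrr mul0r.
apply/eqP; rewrite -sqrf_eq0; apply/eqP.
by move/psumr_eq0P: sum0; apply => // j _; apply: sqr_ge0.
Qed.

Lemma eigen_of_clique_sums_vanish g : (forall i, clique_sum g i = 0) ->
  forall x, \sum_(y | adj x y) g y = - (a / b) * g x.
Proof.
move=> sum0 x; have := clique_sum_incident g x.
rewrite big1 => [incid|i _]; last by rewrite sum0 mulr0.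
apply: (mulfI (lt0r_neq0 b_gt0)); rewrite mulrA mulrN [b * (a / b)]mulrC divfK ?lt0r_neq0 //.
by apply/eqP; rewrite mulNr -addr_eq0 addrC -incid.
Qed.

Lemma clique_min_eigenvalue g : (exists v, g v != 0) ->
  (forall i, clique_sum g i = 0) ->
  eigenfunction adj g (- (a / b)) /\ is_min_eigenvalue adj (- (a / b)).
Proof.
move=> g_nz sum0; have eig_g : eigenfunction adj g (- (a / b)).
  by split=> //; exact: eigen_of_clique_sums_vanish.
split=> //; split; first by exists g.
by move=> mu [h [h_nz eig_h]]; exact: clique_eigen_lower_bound eig_h.
Qed.

End CliqueFamily.

Definition gauss_num (R : numDomainType) (q m : nat) : R := ((q ^ m).-1)%:R / (q.-1)%:R.

Lemma gauss_numE (R : numFieldType) (q m : nat) : (0 < q)%N ->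
  gauss_num R q m = (q%:R ^+ m - 1) / (q%:R - 1).
Proof.
have predE k : (0 < k)%N -> ((k.-1)%:R : R) = k%:R - 1.
  by move=> k_gt0; rewrite -[k in RHS](prednK k_gt0) -natr1 addrK.
by move=> q_gt0; rewrite /gauss_num !predE ?natrX // expn_gt0 q_gt0.
Qed.

Lemma sum_nat_bool (T : finType) (P : pred T) : (\sum_(i : T) (P i : nat) = #|P|)%N.
Proof.
rewrite -sum1_card [RHS]big_mkcond /=.
by apply: eq_bigr => i _; rewrite unfold_in; case: (P i).
Qed.

Section RowCounting.
Variable F : finFieldType.
Local Notation q := #|F|.

Lemma card_nonzero_scalars : #|[pred a : F | a != 0]| = q.-1.
Proof. by rewrite -(cardC1 (0 : F)); apply: eq_card => a; rewrite !inE. Qed.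

Lemma card_line_nonzero k (d : 'rV[F]_k) : d != 0 ->
  #|[pred e : 'rV_k | (e != 0) && (e <= d)%MS]| = q.-1.
Proof.
move=> d_nz; have scale_inj : injective (fun a : F => a *: d).
  move=> x y /eqP; rewrite -subr_eq0 -scalerBl scaler_eq0 (negbTE d_nz) orbF.
  by rewrite subr_eq0 => /eqP.
rewrite -card_nonzero_scalars -(card_image scale_inj [pred a : F | a != 0]).
apply: eq_card => e; rewrite inE.
apply/andP/imageP => [[e_nz /sub_rVP [x e_x]] | [x x_nz ->]].
  exists x => //; rewrite inE; apply: contraNneq e_nz => x0.
  by rewrite e_x x0 scale0r.
rewrite inE in x_nz; split; last exact: scalemx_sub.
by rewrite scaler_eq0 negb_or x_nz d_nz.
Qed.

Lemma card_rows_on_line n m (e : 'rV[F]_m) : e != 0 ->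
  #|[pred D : 'M[F]_(n, m) | (D <= e)%MS]| = (q ^ n)%N.
Proof.
move=> e_nz; have e_free : row_free e by rewrite /row_free rank_rV e_nz.
have mul_inj := row_free_inj (p := m) (m := n) e_free.
rewrite -[X in (q ^ X)%N]muln1 -card_mx -(card_image mul_inj).
by apply: eq_card => D; rewrite inE; apply/submxP/imageP => [[u ->]|[u _ ->]]; exists u.
Qed.

Lemma nz_row_rank1_eqmx p k (A : 'M[F]_(p, k)) : \rank A = 1%N -> (nz_row A == A)%MS.
Proof.
move=> r1; rewrite -(geq_leqif (mxrank_leqif_eq (nz_row_sub A))) r1 rank_rV.
by rewrite nz_row_eq0 -mxrank_eq0 r1.
Qed.

Lemma nz_row_rank1_neq0 p k (A : 'M[F]_(p, k)) : \rank A = 1%N -> nz_row A != 0.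
Proof. by move=> r1; rewrite nz_row_eq0 -mxrank_eq0 r1. Qed.

Lemma rV_submx_sym k (u v : 'rV[F]_k) : u != 0 -> v != 0 -> (u <= v)%MS = (v <= u)%MS.
Proof.
by move=> u_nz v_nz; apply/idP/idP => uv;
  rewrite -(geq_leqif (mxrank_leqif_sup uv)) !rank_rV u_nz v_nz.
Qed.

Lemma card_lines_above p k (D : 'M[F]_(p, k)) :
  #|[pred e : 'rV_k | (e != 0) && (D <= e)%MS]| =
  if D == 0 then (q ^ k).-1 else if \rank D == 1%N then q.-1 else 0%N.
Proof.
have [->|D_nz] := eqVneq D 0.
  rewrite -[X in (q ^ X)%N]mul1n -card_mx -(cardC1 (0 : 'rV_k)).
  by apply: eq_card => e; rewrite !inE sub0mx andbT.
case: eqP => [r1|r_neq1].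
  rewrite -(card_line_nonzero (nz_row_rank1_neq0 r1)); apply: eq_card => e.
  rewrite !inE; case e_nz: (e != 0) => //=.
  have /eqmxP <- := nz_row_rank1_eqmx r1.
  by rewrite (rV_submx_sym (nz_row_rank1_neq0 r1) e_nz).
apply: eq_card0 => e; rewrite !inE; apply/negP => /andP [e_nz /mxrankS].
have : \rank D != 0%N by rewrite mxrank_eq0.
by rewrite rank_rV e_nz; move: r_neq1; case: (\rank D) => [|[|]].
Qed.

End RowCounting.

Section BilinearFormsCliques.
Variables (F : finFieldType) (n m : nat).
Local Notation q := #|F|.

Definition bil_clique_mem (i : 'rV[F]_m * 'M[F]_(n, m)) (X : 'M[F]_(n, m)) : bool :=
  (i.1 != 0) && (X - i.2 <= i.1)%MS.

(* X and Y lie in a common clique (e, N0) iff the rows of Y - X lie on <e>,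
   and then there are q^n choices of N0. *)
Lemma bil_common_cliques_line X Y :
  (\sum_i ((bil_clique_mem i X && bil_clique_mem i Y) : nat) =
   \sum_(e : 'rV_m) (((e != 0) && (Y - X <= e)%MS)%R : nat) * q ^ n)%N.
Proof.
transitivity (\sum_e \sum_N0
    (bil_clique_mem (e, N0) X && bil_clique_mem (e, N0) Y : nat))%N.
  by rewrite pair_bigA; apply: eq_bigr => -[e N0].
apply: eq_bigr => e _; rewrite /bil_clique_mem /=.
have [->|e_nz] := eqVneq e 0; first by rewrite big1.
transitivity (\sum_N0 ((((Y - X <= e)%MS && (X - N0 <= e)%MS))%R : nat))%N.
  apply: eq_bigr => N0 _; congr nat_of_bool.
  have -> : Y - N0 = (Y - X) + (X - N0) by rewrite addrA subrK.
  apply/andP/andP => [[XN0 YN0]|[YX XN0]]; split => //; last exact: addmx_sub.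
  by rewrite -(addrK (X - N0) (Y - X)) addmx_sub // eqmx_opp.
case: (Y - X <= e)%MS; last by rewrite big1.
rewrite mul1n (reindex_inj (subrI X)) /=.
under eq_bigr => D _ do rewrite opprB addrC subrK.
by rewrite sum_nat_bool card_rows_on_line.
Qed.

Lemma bil_common_cliques X Y : (\sum_i ((bil_clique_mem i X && bil_clique_mem i Y) : nat) =
  (X == Y) * (q ^ n * (q ^ m).-1) + bil_adj X Y * (q ^ n * q.-1))%N.
Proof.
rewrite bil_common_cliques_line -big_distrl /= sum_nat_bool card_lines_above.
rewrite subr_eq0 /bil_adj -mxrank_opp opprB.
have [->|_] := eqVneq Y X; first by rewrite subrr mxrank0 /= mul1n addn0 mulnC.
by case: (\rank (X - Y) == 1%N); rewrite /= ?mul0n ?mul1n ?add0n // mulnC.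
Qed.

Lemma bil_clique_sums_vanish (R : realFieldType) (f : 'M[F]_(n, m) -> R) :
  (forall X, \sum_(Y | bil_adj X Y) f Y = - gauss_num R q m * f X) ->
  forall i, clique_sum bil_clique_mem f i = 0.
Proof.
move=> eig; have q_gt1 : (1 < q)%N := card_finNzRing_gt1 F.
pose a : R := (q ^ n * (q ^ m).-1)%:R; pose b : R := (q ^ n * q.-1)%:R.
have b_gt0 : 0 < b by rewrite ltr0n muln_gt0 expn_gt0 (ltnW q_gt1) -subn1 subn_gt0.
have gauss_ab : gauss_num R q m = a / b.
  have qn_nz : (q ^ n)%:R != 0 :> R by rewrite pnatr_eq0 -lt0n expn_gt0 ltnW.
  by rewrite /a /b !natrM invfM mulrACA divff // mul1r.
rewrite gauss_ab in eig.
apply: (clique_sums_vanish b_gt0 _ eig) => X Y.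
by rewrite /a /b -!natrM -natrD -natr_sum bil_common_cliques.
Qed.

End BilinearFormsCliques.

Section GrassmannCliques.
Variables (F : finFieldType) (N : nat).
Local Notation q := #|F|.
Local Notation vertex k := (grass_vertex F N k).

Lemma vertex_rank k (U : vertex k) : \rank (val U) = k.
Proof. by case: U => A /= /andP [_ /eqP]. Qed.

Lemma vertex_genmx k (U : vertex k) : <<val U>>%MS = val U.
Proof. by case: U => A /= /andP [/eqP]. Qed.

Lemma vertex_eqmx_inj k (U W : vertex k) : (val U == val W)%MS -> U = W.
Proof.
by move=> /eqmxP UW; apply: val_inj; rewrite -vertex_genmx -(vertex_genmx W) (eq_genmx UW).
Qed.

Lemma vertex_of_proof k p (K : 'M[F]_(p, N)) : \rank K = k -> grass_vertex_pred k <<K>>%MS.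
Proof. by move=> rK; rewrite /grass_vertex_pred genmx_id mxrank_gen rK !eqxx. Qed.

Definition vertex_of k p (K : 'M[F]_(p, N)) (rK : \rank K = k) : vertex k :=
  exist (fun A => grass_vertex_pred k A) <<K>>%MS (vertex_of_proof rK).

Lemma sum_vertex_eqmx k p (K : 'M[F]_(p, N)) : \rank K = k ->
  (\sum_(U : vertex k) ((K == val U)%MS : nat) = 1)%N.
Proof.
move=> rK; rewrite (bigD1 (vertex_of rK)) /= ?genmxE ?submx_refl // big1 ?addn0 //.
move=> U /negbTE UK; apply/eqP; rewrite eqb0; apply: contraFN UK => KU; apply/eqP.
by apply: vertex_eqmx_inj; rewrite /= !genmxE andbC.
Qed.

Lemma card_hyperplane_equations m (B : 'M[F]_(m, N)) (H : 'M[F]_N) :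
  (1 <= m)%N -> row_free B -> (H <= B)%MS -> \rank H = m.-1 ->
  (\sum_(e : 'rV[F]_m) (((e != 0) && (kermx e^T *m B == H)%MS)%R : nat) = q.-1)%N.
Proof.
move=> m_gt0 B_free HB rH; set Y := H *m pinvmx B.
have HY : H = Y *m B by rewrite mulmxKpV.
have rY : \rank Y = m.-1 by rewrite -(mxrankMfree _ B_free) -HY.
have rKY : \rank (kermx Y^T) = 1%N by rewrite mxrank_ker mxrank_tr rY; lia.
rewrite sum_nat_bool -(card_line_nonzero (nz_row_rank1_neq0 rKY)).
apply: eq_card => e; rewrite !unfold_in /=; case e_nz: (e != 0) => //=.
have rKe : \rank (kermx e^T) = m.-1.
  by rewrite mxrank_ker mxrank_tr rank_rV e_nz subn1.
rewrite HY !submxMfree //.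
have -> : ((kermx e^T <= Y) && (Y <= kermx e^T))%MS = (Y <= kermx e^T)%MS.
  apply/andP/idP => [[] //| YK]; split => //.
  by rewrite -(geq_leqif (mxrank_leqif_sup YK)) rY rKe.
rewrite sub_kermx -trmx_eq0 trmx_mul trmxK -sub_kermx.
by have /eqmxP -> := nz_row_rank1_eqmx rKY.
Qed.

(* Double counting pairs (e, H) with e nonzero: an m-space has
   (q^m - 1)/(q - 1) hyperplanes. *)
Lemma count_hyperplanes m (U : vertex m) : (1 <= m)%N ->
  ((\sum_(H : vertex m.-1) ((val H <= val U)%MS : nat)) * q.-1 = (q ^ m).-1)%N.
Proof.
move=> m_gt0.
pose B := castmx (vertex_rank U, erefl N) (row_base (val U)).
have /eqmxP BU : (B == val U)%MS.
  by apply/eqmxP; exact: eqmx_trans (eqmx_cast _ _) (eq_row_base _).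
have B_free : row_free B by rewrite /row_free BU vertex_rank.
pose hyp (e : 'rV[F]_m) := kermx e^T *m B.
have hyp_rank e : e != 0 -> \rank (hyp e) = m.-1.
  by move=> e_nz; rewrite mxrankMfree // mxrank_ker mxrank_tr rank_rV e_nz subn1.
have hyp_sub e : (hyp e <= val U)%MS by rewrite -BU submxMl.
have -> : (q ^ m).-1 = (\sum_(e : 'rV[F]_m) ((e != 0)%R : nat))%N.
  rewrite sum_nat_bool -[X in (q ^ X)%N]mul1n -card_mx -(cardC1 (0 : 'rV_m)).
  by apply: eq_card => e; rewrite !inE.
transitivity (\sum_(e : 'rV[F]_m) \sum_(H : vertex m.-1)
   (((e != 0) && (hyp e == val H)%MS)%R : nat))%N; last first.
  apply: eq_bigr => e _; case e_nz: (e != 0) => /=; last by rewrite big1.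
  by rewrite sum_vertex_eqmx // hyp_rank.
rewrite exchange_big /= big_distrl /=; apply: eq_bigr => H _.
case HU: (val H <= val U)%MS.
  by rewrite mul1n card_hyperplane_equations ?BU ?vertex_rank.
rewrite big1 // => e _; apply/eqP; rewrite eqb0; apply/negP => /andP [_ /andP [_ eH]].
by rewrite (submx_trans eH (hyp_sub e)) in HU.
Qed.

(* Two distinct m-spaces contain a common hyperplane iff they are adjacent,
   and then it is unique (their intersection). *)
Lemma common_hyperplanes m (U W : vertex m) : (1 <= m)%N -> U != W ->
  (\sum_(H : vertex m.-1) (((val H <= val U)%MS && (val H <= val W)%MS) : nat)
     = grass_adj U W)%N.
Proof.
move=> m_gt0 UW; under eq_bigr => H _ do rewrite -sub_capmx.
rewrite /grass_adj; case: eqP => [r|r].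
  rewrite /= -(sum_vertex_eqmx r); apply: eq_bigr => H _; congr nat_of_bool.
  apply/idP/andP => [HUW|[] //]; split => //.
  by rewrite -(geq_leqif (mxrank_leqif_sup HUW)) r vertex_rank.
rewrite big1 // => H _; apply/eqP; rewrite eqb0; apply/negP => /mxrankS.
have := mxrankS (capmxSl (val U) (val W)); rewrite !vertex_rank => r1 r2.
have U_cap : (val U <= val U :&: val W)%MS.
  by rewrite -(geq_leqif (mxrank_leqif_sup (capmxSl _ _))) vertex_rank; lia.
have U_W : (val U <= val W)%MS := submx_trans U_cap (capmxSr _ _).
move/negP: UW; apply; apply/eqP; apply: vertex_eqmx_inj; rewrite U_W /=.
by rewrite -(geq_leqif (mxrank_leqif_sup U_W)) !vertex_rank.
Qed.

Definition star_mem m (H : vertex m.-1) (U : vertex m) : bool := (val H <= val U)%MS.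

Lemma star_common_cliques (R : numFieldType) m (U W : vertex m) : (1 <= m)%N ->
  \sum_H ((star_mem H U && star_mem H W)%:R : R) =
  (U == W)%:R * gauss_num R q m + (grass_adj U W)%:R * 1.
Proof.
move=> m_gt0; rewrite -natr_sum /star_mem; have [<-|UW] := eqVneq U W; last first.
  by rewrite common_hyperplanes // mul0r add0r mulr1.
under eq_bigr do rewrite andbb.
have q_pred_gt0 : (0 < q.-1)%N by rewrite -subn1 subn_gt0 card_finNzRing_gt1.
rewrite /gauss_num -(count_hyperplanes U) // natrM mulfK ?pnatr_eq0 -?lt0n //.
have capUU : (val U :&: val U == val U)%MS by rewrite capmxSl sub_capmx submx_refl.
rewrite /grass_adj (eqmx_rank capUU) vertex_rank.
by rewrite gtn_eqF ?ltn_predL // mul0r addr0 mul1r.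
Qed.

End GrassmannCliques.

Section LiftToGrassmann.
Variables (F : finFieldType) (n m : nat).

Lemma embed_mx_submx p (K : 'M[F]_(p, m + n)) (M : 'M[F]_(n, m)) :
  (K <= embed_mx M)%MS = (rsubmx K == lsubmx K *m M^T).
Proof.
rewrite /embed_mx; apply/submxP/eqP => [[Z ->]|KM].
  by rewrite mul_mx_row mulmx1 row_mxKr row_mxKl.
by exists (lsubmx K); rewrite mul_mx_row mulmx1 -KM hsubmxK.
Qed.

Lemma embed_mx_free (M : 'M[F]_(n, m)) : row_free (embed_mx M).
Proof.
by apply/row_freeP; exists (col_mx 1%:M 0); rewrite mul_row_col mulmx0 addr0 mulmx1.
Qed.

Lemma embed_mx_rank (M : 'M[F]_(n, m)) : \rank (embed_mx M) = m.
Proof. exact/eqnP/embed_mx_free. Qed.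

Lemma embed_mx_inj (M M' : 'M[F]_(n, m)) : (embed_mx M <= embed_mx M')%MS -> M = M'.
Proof.
by rewrite embed_mx_submx /embed_mx row_mxKr row_mxKl mul1mx => /eqP /trmx_inj.
Qed.

(* The lift as a sum over all matrices, avoiding the choice in its definition. *)
Lemma lift_funE (R : numDomainType) (f : 'M[F]_(n, m) -> R) (U : grass_vertex F (m + n) m) :
  lift_fun f U = \sum_M ((embed_mx M == val U)%MS)%:R * f M.
Proof.
rewrite /lift_fun; case: pickP => [M MU|noM]; last first.
  by rewrite big1 // => M _; rewrite noM mul0r.
rewrite (bigD1 M) //= MU mul1r big1 ?addr0 // => M' M'M.
case M'U: (embed_mx M' == val U)%MS; last by rewrite mul0r.
case/negP: M'M; apply/eqP/embed_mx_inj.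
by case/andP: M'U => M'U _; case/andP: MU => _ UM; exact: submx_trans M'U UM.
Qed.

(* The lift of a nonzero function is nonzero: it agrees with f on overline M. *)
Lemma lift_fun_nonzero (R : numDomainType) (f : 'M[F]_(n, m) -> R) :
  (exists M, f M != 0) -> exists U, lift_fun f U != 0.
Proof.
move=> [M fM]; exists (vertex_of (embed_mx_rank M)).
rewrite lift_funE (bigD1 M) //= !genmxE submx_refl mul1r big1 ?addr0 // => M' M'M.
case e: (embed_mx M' == <<embed_mx M>>)%MS; last by rewrite mul0r.
by case/andP: e; rewrite genmxE => /embed_mx_inj M'_M; rewrite M'_M eqxx in M'M.
Qed.

(* Summing the lift over the m-spaces containing K only sees the vertices
   overline M, each exactly once. *)
Lemma lift_star_sum (R : numDomainType) (f : 'M[F]_(n, m) -> R) (K : 'M[F]_(m + n)) :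
  \sum_(U : grass_vertex F (m + n) m) ((K <= val U)%MS)%:R * lift_fun f U =
  \sum_M ((K <= embed_mx M)%MS)%:R * f M.
Proof.
under eq_bigr => U _ do rewrite lift_funE mulr_sumr.
rewrite exchange_big /=; apply: eq_bigr => M _.
transitivity (\sum_(U : grass_vertex F (m + n) m)
   ((((K <= embed_mx M)%MS && (embed_mx M == val U)%MS) : nat)%:R * f M)).
  apply: eq_bigr => U _; rewrite mulrA; congr (_ * _).
  case MU: (embed_mx M == val U)%MS; rewrite ?mulr0 ?andbF //= mulr1 andbT.
  by have /eqmxP -> := MU.
rewrite -mulr_suml -natr_sum; congr (_%:R * _).
case: (K <= embed_mx M)%MS => /=; last by rewrite big1.
exact: sum_vertex_eqmx (embed_mx_rank M).
Qed.

Lemma embed_star_clique (K : 'M[F]_(m + n)) (N0 : 'M[F]_(n, m)) :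
  (1 <= m)%N -> \rank K = m.-1 -> (K <= embed_mx N0)%MS ->
  exists i, forall M, (K <= embed_mx M)%MS = bil_clique_mem i M.
Proof.
move=> m_gt0 rK KN0; set L := lsubmx K.
have KL : rsubmx K = L *m N0^T by apply/eqP; rewrite -embed_mx_submx.
have rL : \rank L = m.-1.
  rewrite -(mxrankMfree _ (embed_mx_free N0)) -rK.
  by rewrite /embed_mx mul_mx_row mulmx1 -KL hsubmxK.
have rKL : \rank (kermx L^T) = 1%N by rewrite mxrank_ker mxrank_tr rL; lia.
exists (nz_row (kermx L^T), N0) => M; rewrite /bil_clique_mem /= nz_row_rank1_neq0 //=.
have /eqmxP -> := nz_row_rank1_eqmx rKL.
rewrite sub_kermx embed_mx_submx KL -/L -trmx_eq0 trmx_mul trmxK.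
by rewrite linearB /= mulmxBr subr_eq0 eq_sym.
Qed.

Lemma lift_star_sums_vanish (R : realFieldType) (f : 'M[F]_(n, m) -> R) :
  (1 <= m)%N -> (forall i, clique_sum (@bil_clique_mem F n m) f i = 0) ->
  forall H, clique_sum (@star_mem F (m + n) m) (lift_fun f) H = 0.
Proof.
move=> m_gt0 bil_sum0 H; rewrite /clique_sum /star_mem lift_star_sum.
case: (pickP (fun M => (val H <= embed_mx M)%MS)) => [N0 HN0|noM]; last first.
  by rewrite big1 // => M _; rewrite noM mul0r.
have [i clique_i] := embed_star_clique m_gt0 (vertex_rank H) HN0.
by rewrite -[RHS](bil_sum0 i); apply: eq_bigr => M _; rewrite clique_i.
Qed.

End LiftToGrassmann.

Theorem mainTheorem8 (R : realType) (F : finFieldType) (n m : nat)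
  (hm1 : (1 <= m)%N) (hmn : (m <= n)%N) (f : 'M[F]_(n, m) -> R) :
  let q : R := (#|F|)%:R in
  let lam : R := - ((q ^+ m - 1) / (q - 1)) in
  eigenfunction (@bil_adj F n m) f lam ->
  eigenfunction (@grass_adj F (m + n) m) (lift_fun f) lam /\
  is_min_eigenvalue (@grass_adj F (m + n) m) lam.
Proof.
move=> q lam [f_nz f_eig].
have lamE : lam = - gauss_num R #|F| m.
  by rewrite gauss_numE // ltnW ?card_finNzRing_gt1.
rewrite lamE in f_eig *; rewrite -[gauss_num _ _ _]divr1.
apply: (clique_min_eigenvalue ltr01 (fun U W => star_common_cliques R U W hm1)).
  exact: lift_fun_nonzero.
exact: lift_star_sums_vanish hm1 (bil_clique_sums_vanish f_eig).
Qed.
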